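(* Let $G$ be a bus graph containing a $(B,o)$-flipper (as defined below), a $\mathcal{C}$-vertex $i$ joined to the flipper by the edge $(B,i)$, and a $\mathcal{B}$-vertex $O$ joined to the flipper by the edge $(O,o)$. Then in any realization $\Gamma$ of $G$: (1) $\Gamma((B,i))$ and $\Gamma((O,o))$ are perpendicular; (2) $\Gamma(B)$ and $\Gamma(O)$ are perpendicular.
   Context: A bus graph is a finite bipartite graph $G=(\mathcal{B},\mathcal{C};\mathcal{E})$ with $\deg(c)\le 4$ for all $c\in\mathcal{C}$. A realization $\Gamma$ of $G$ in the integer grid is a drawing such that: (1) each $B\in\mathcal{B}$ is drawn as a closed line segment $\Gamma(B)$ along a grid line (a ''bus''); (2) each $c\in\mathcal{C}$ is drawn as a grid point $\Gamma(c)$; (3) each edge $(B,c)\in\mathcal{E}$ is drawn as a closed line segment along a grid line between a point of $\Gamma(B)$ and $\Gamma(c)$, perpendicular to $\Gamma(B)$, containing no connectors or buses other than $\Gamma(B)$ and $\Gamma(c)$ (edges may cross other edges); (4) no two buses or connectors intersect. An $(A,B)$-perp consists of three distinct $\mathcal{C}$-vertices $x,y,z$, five distinct $\mathcal{B}$-vertices $A,A',B,B',C$, and the twelve edges $(A,x),(A',x),(B,x),(B',x)$, $(A,y),(A',y),(B,y),(C,y)$, $(A,z),(A',z),(B',z),(C,z)$. A $(B,o)$-flipper consists of an $(A,B)$-perp together with one additional $\mathcal{C}$-vertex $o$ and two additional edges $(B,o)$ and $(B',o)$. *)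

From HB Require Import structures.
From mathcomp Require Import all_boot all_order all_algebra.
Set Implicit Arguments. Unset Strict Implicit. Unset Printing Implicit Defensive.
Import Order.TTheory GRing.Theory Num.Theory.
Local Open Scope ring_scope.

Definition point := (int * int)%type.

(** An axis-parallel closed segment along a grid line:
    if [horiz s], it is {(t, fixc s) | lo s <= t <= hi s};
    otherwise it is {(fixc s, t) | lo s <= t <= hi s}. *)
Record seg := Seg { horiz : bool; fixc : int; lo : int; hi : int }.

Definition well_formed_seg (s : seg) : bool := lo s <= hi s.

(** Grid point p lies on segment s.  (All segments here have integer
    data, so two of them meet iff they share a grid point.) *)
Definition on_seg (s : seg) (p : point) : bool :=
  if horiz s then (p.2 == fixc s) && (lo s <= p.1 <= hi s)
  else (p.1 == fixc s) && (lo s <= p.2 <= hi s).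

Definition seg_meet (s t : seg) : Prop := exists p : point, on_seg s p && on_seg t p.

Definition perpendicular (s t : seg) : bool := horiz s != horiz t.

Definition attach (s : seg) (p : point) : point :=
  if horiz s then (p.1, fixc s) else (fixc s, p.2).

Definition edge_seg (s : seg) (p : point) : seg :=
  if horiz s then Seg false p.1 (Num.min (fixc s) p.2) (Num.max (fixc s) p.2)
  else Seg true p.2 (Num.min (fixc s) p.1) (Num.max (fixc s) p.1).

(** Bus graph: bipartite graph with sides Bv (buses) and Cv (connectors),
    edge relation E, every connector of degree at most 4. *)
Definition bus_graph (Bv Cv : finType) (E : Bv -> Cv -> bool) : Prop :=
  forall c : Cv, (#|[set b | E b c]| <= 4)%N.

(** Realization: bus b drawn as segment gb b, connector c as grid point gc c;
    edge (b,c) drawn as edge_seg (gb b) (gc c). *)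
Definition realization (Bv Cv : finType) (E : Bv -> Cv -> bool)
    (gb : Bv -> seg) (gc : Cv -> point) : Prop :=
  [/\
      forall b, well_formed_seg (gb b),
      (* (3) edges: perpendicular to the bus, from a point of the bus to the connector *)
      forall b c, E b c -> on_seg (gb b) (attach (gb b) (gc c)),
      forall b c c', E b c -> c' != c -> ~~ on_seg (edge_seg (gb b) (gc c)) (gc c'),
      forall b c b', E b c -> b' != b -> ~ seg_meet (edge_seg (gb b) (gc c)) (gb b')
    &
      [/\ forall b b', b != b' -> ~ seg_meet (gb b) (gb b'),
          forall c c', c != c' -> gc c != gc c'
        & forall b c, ~~ on_seg (gb b) (gc c)]].

Definition perp (Bv Cv : finType) (E : Bv -> Cv -> bool)
    (A A' B B' C : Bv) (x y z : Cv) : Prop :=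
  [/\ uniq [:: x; y; z], uniq [:: A; A'; B; B'; C],
      [&& E A x, E A' x, E B x & E B' x],
      [&& E A y, E A' y, E B y & E C y]
    & [&& E A z, E A' z, E B' z & E C z]].

Definition flipper (Bv Cv : finType) (E : Bv -> Cv -> bool)
    (A A' B B' C : Bv) (x y z o : Cv) : Prop :=
  [/\ perp E A A' B B' C x y z, o \notin [:: x; y; z], E B o & E B' o].

(** Two parallel buses sharing a connector lie on opposite sides of it:
    otherwise the edge from the farther bus would cross the nearer one.
    Hence no three buses at a connector are parallel, and four buses at a
    connector split two and two: one pair is parallel iff the other is.
    Reading this at x, y and z, the parallelism of A and A' is equivalent to
    that of B and B', of B and C, and of B' and C.  These three cannot all
    fail with only two directions available, so B and B' are parallel, and
    at o the third bus O must be perpendicular to them.  Edges being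
    perpendicular to their buses, (1) follows from (2). *)

From mathcomp Require Import all_boot all_order all_algebra.
From mathcomp Require Import zify.
Set Implicit Arguments. Unset Strict Implicit. Unset Printing Implicit Defensive.
Import Order.TTheory GRing.Theory Num.Theory.
Local Open Scope ring_scope.

Definition cross_coord (s : seg) (p : point) : int :=
  if horiz s then p.2 else p.1.

Definition side (s : seg) (p : point) : bool := fixc s < cross_coord s p.

Lemma horiz_edge_seg (s : seg) (p : point) : horiz (edge_seg s p) = ~~ horiz s.
Proof. by case: s => [[]]. Qed.

Lemma perpendicular_edge_seg (s t : seg) (p q : point) :
  perpendicular (edge_seg s p) (edge_seg t q) = perpendicular s t.
Proof. by rewrite /perpendicular !horiz_edge_seg; case: (horiz s); case: (horiz t). Qed.

Section Realization.

Variables (Bv Cv : finType) (E : Bv -> Cv -> bool).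
Variables (gb : Bv -> seg) (gc : Cv -> point).
Hypothesis HR : realization E gb gc.

Let h (b : Bv) : bool := horiz (gb b).

Lemma connector_off_bus_line b c :
  E b c -> fixc (gb b) != cross_coord (gb b) (gc c).
Proof.
case: HR => _ attach_on_bus _ _ [_ _ off_bus] Ebc.
move: (attach_on_bus b c Ebc) (off_bus b c).
rewrite /attach /cross_coord /on_seg; case: (gc c) => p1 p2.
by case: (horiz (gb b)) => /=; rewrite eqxx /= => ->; rewrite andbT eq_sym.
Qed.

Lemma parallel_bus_not_between b b' c :
  E b c -> E b' c -> b != b' -> h b = h b' ->
  ~ ((cross_coord (gb b) (gc c) <= fixc (gb b) <= fixc (gb b')) \/
     (fixc (gb b') <= fixc (gb b) <= cross_coord (gb b) (gc c))).
Proof.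
case: HR => _ attach_on_bus _ edge_avoids_buses _ Ebc Eb'c nbb' hbb' between.
apply: (edge_avoids_buses b' c b Eb'c nbb').
exists (attach (gb b) (gc c)); rewrite attach_on_bus // andbT.
move: between; rewrite /cross_coord /attach /edge_seg /on_seg /h in hbb' *; rewrite -hbb'.
by case: (horiz (gb b)) => /=; rewrite eqxx ge_min le_max /=; lia.
Qed.

Lemma parallel_buses_opposite_sides b b' c :
  E b c -> E b' c -> b != b' -> h b = h b' ->
  side (gb b) (gc c) != side (gb b') (gc c).
Proof.
move=> Ebc Eb'c nbb' hbb'; have nb'b : b' != b by rewrite eq_sym.
have off := connector_off_bus_line Ebc; have off' := connector_off_bus_line Eb'c.
have nb := parallel_bus_not_between Ebc Eb'c nbb' hbb'.
have nb' := parallel_bus_not_between Eb'c Ebc nb'b (esym hbb').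
rewrite /h in hbb'; move: off off' nb nb'; rewrite /side /cross_coord -hbb'.
move=> off off' nb nb'; apply/negP => /eqP.
by case: ltP => ?; case: ltP => ? // _; lia.
Qed.

Lemma parallel_pair_perp_third b1 b2 b3 c :
  E b1 c -> E b2 c -> E b3 c -> uniq [:: b1; b2; b3] ->
  h b1 = h b2 -> h b3 != h b1.
Proof.
move=> E1 E2 E3; rewrite /= !inE => /andP [/norP [n12 n13] /andP [n23 _]] h12.
apply/negP => /eqP h31.
have s12 := parallel_buses_opposite_sides E1 E2 n12 h12.
have s13 := parallel_buses_opposite_sides E1 E3 n13 (esym h31).
have s23 := parallel_buses_opposite_sides E2 E3 n23 (etrans (esym h12) (esym h31)).
by move: s12 s13 s23; do 3!case: side.
Qed.

Lemma parallel_pair_parallel_other_pair b1 b2 b3 b4 c :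
  E b1 c -> E b2 c -> E b3 c -> E b4 c -> uniq [:: b1; b2; b3; b4] ->
  h b1 = h b2 -> h b3 = h b4.
Proof.
move=> E1 E2 E3 E4 U h12.
have U3 : uniq [:: b1; b2; b3] := mask_uniq U [:: true; true; true].
have U4 : uniq [:: b1; b2; b4] := mask_uniq U [:: true; true; false; true].
have := parallel_pair_perp_third E1 E2 E3 U3 h12.
have := parallel_pair_perp_third E1 E2 E4 U4 h12.
by do 3!case: h.
Qed.

Lemma parallel_pairs_at_connector b1 b2 b3 b4 c :
  E b1 c -> E b2 c -> E b3 c -> E b4 c -> uniq [:: b1; b2; b3; b4] ->
  (h b1 == h b2) = (h b3 == h b4).
Proof.
move=> E1 E2 E3 E4 U; apply/eqP/eqP.
- exact: parallel_pair_parallel_other_pair E1 E2 E3 E4 U.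
- by apply: parallel_pair_parallel_other_pair E3 E4 E1 E2 _; rewrite -(rot_uniq 2).
Qed.

End Realization.

Theorem lemma4 (Bv Cv : finType) (E : Bv -> Cv -> bool) (HG : bus_graph E)
    (A A' B B' C O : Bv) (x y z o i : Cv)
    (Hfl : flipper E A A' B B' C x y z o)
    (Hi : i \notin [:: x; y; z; o]) (HO : O \notin [:: A; A'; B; B'; C])
    (HBi : E B i) (HOo : E O o)
    (gb : Bv -> seg) (gc : Cv -> point) (HR : realization E gb gc) :
  perpendicular (edge_seg (gb B) (gc i)) (edge_seg (gb O) (gc o)) /\
  perpendicular (gb B) (gb O).
Proof.
case: Hfl => [[_ U /and4P[Ax A'x Bx B'x] /and4P[Ay A'y By Cy] /and4P[Az A'z B'z Cz]]].
move=> _ EBo EB'o.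
have at_x := parallel_pairs_at_connector HR Ax A'x Bx B'x
  (mask_uniq U [:: true; true; true; true]).
have at_y := parallel_pairs_at_connector HR Ay A'y By Cy
  (mask_uniq U [:: true; true; true; false; true]).
have at_z := parallel_pairs_at_connector HR Az A'z B'z Cz
  (mask_uniq U [:: true; true; false; true; true]).
have parallel_BB' : horiz (gb B) = horiz (gb B').
  rewrite at_x in at_y at_z; move: at_y at_z.
  by case: (horiz (gb B)) (horiz (gb B')) (horiz (gb C)) => [] [] [].
have uniq_BB'O : uniq [:: B; B'; O].
  rewrite -[[:: B; B'; O]]/(rcons [:: B; B'] O) rcons_uniq.
  rewrite (mask_uniq U [:: false; false; true; true]) andbT.
  exact: contra (@mem_mask _ _ [:: false; false; true; true] _) HO.
have perp_OB := parallel_pair_perp_third HR EBo EB'o HOo uniq_BB'O parallel_BB'.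
by rewrite perpendicular_edge_seg /perpendicular eq_sym perp_OB.
Qed.
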